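(* For every complex $s$ with $\Re(s)>3$, \[\sum_{k=1}^\infty k\,\zeta(s,2k)=\tfrac{1}{8}\Big\{(1+2^{1-s})\zeta(s-1)+\zeta(s-2)-2^{1-s}\Big(\zeta\big(s-1,\tfrac12\big)+\tfrac12 \zeta\big(s,\tfrac12\big)\Big)\Big\}.\]
   Context: $\zeta(s,\alpha)=\sum_{n=0}^\infty (n+\alpha)^{-s}$ denotes the Hurwitz zeta function ($\Re(s)>1$, $\alpha>0$), and $\zeta(s)=\zeta(s,1)$ is the Riemann zeta function. *)

From Stdlib Require Import Reals.
From Coquelicot Require Import Coquelicot.
Open Scope R_scope.

(* Complex power x^w for a real base x > 0 with principal logarithm:
   x^w = exp(w * ln x) = exp(Re w ln x) (cos(Im w ln x) + i sin(Im w ln x)). *)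
Definition cpow_pos (x : R) (w : C) : C :=
  (exp (Re w * ln x) * cos (Im w * ln x),
   exp (Re w * ln x) * sin (Im w * ln x)).

(* Sum of a complex series, defined componentwise (the value of the series
   when it converges). *)
Definition CSeries (a : nat -> C) : C :=
  (Series (fun n => Re (a n)), Series (fun n => Im (a n))).

Definition hurwitz_zeta (s : C) (alpha : R) : C :=
  CSeries (fun n => cpow_pos (INR n + alpha) (Copp s)).

Definition riemann_zeta (s : C) : C := hurwitz_zeta s 1.

(* Expanding zeta(s, 2m+2) = sum_(n >= 2m+2) n^(-s) and exchanging the
   order of summation, the terms n = 2j+2 and n = 2j+3 both receive the weight
   1 + 2 + ... + (j+1) = (j+1)(j+2)/2.  Rigorously this is a summation by parts:
   the M-th partial sum of the theorem's series equals the M-th partial sum of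
   these weighted "blocks" plus a remainder (M+1)(M+2)/2 zeta(s, 2M+4), which is
   O(M^(3 - Re s)) and hence tends to 0 when Re s > 3.  Writing the weights as
   (n^2 + 2n)/8 resp. (n^2 - 1)/8 splits the block series into the series of
   zeta(s-2), zeta(s-1) and zeta(s, 1/2); the duplication formula
   2^(-w) (zeta(w, 1/2) + zeta(w)) = zeta(w) at w = s - 1 finishes the algebra. *)

From Stdlib Require Import Reals Lra Lia.
From Coquelicot Require Import Coquelicot.
Open Scope R_scope.

Ltac C_field :=
  apply injective_projections; unfold Cminus, Cplus, Cmult, Copp, RtoC;
  cbn [fst snd]; field.

Lemma cpow_pos_add (x : R) (w1 w2 : C) :
  cpow_pos x (Cplus w1 w2) = Cmult (cpow_pos x w1) (cpow_pos x w2).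
Proof.
  destruct w1 as [a b], w2 as [c d]; unfold cpow_pos, Cmult, Cplus; simpl.
  rewrite !Rmult_plus_distr_r, exp_plus, cos_plus, sin_plus.
  f_equal; ring.
Qed.

Lemma cpow_pos_mul (x y : R) (w : C) : 0 < x -> 0 < y ->
  cpow_pos (x * y) w = Cmult (cpow_pos x w) (cpow_pos y w).
Proof.
  intros hx hy; destruct w as [a b]; unfold cpow_pos, Cmult; simpl.
  rewrite ln_mult, !Rmult_plus_distr_l, exp_plus, cos_plus, sin_plus by assumption.
  f_equal; ring.
Qed.

Lemma cpow_pos_succ (x : R) (w : C) : 0 < x ->
  cpow_pos x (Cplus (RtoC 1) w) = Cmult (RtoC x) (cpow_pos x w).
Proof.
  intros hx; rewrite cpow_pos_add; f_equal.
  unfold cpow_pos, RtoC; simpl.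
  rewrite Rmult_1_l, Rmult_0_l, exp_ln, cos_0, sin_0 by assumption.
  f_equal; ring.
Qed.

Lemma cpow_pos_base_1 (w : C) : cpow_pos 1 w = RtoC 1.
Proof.
  unfold cpow_pos, RtoC; rewrite ln_1, !Rmult_0_r, exp_0, cos_0, sin_0.
  f_equal; ring.
Qed.

Lemma Cmod_cpow_pos (x : R) (w : C) : Cmod (cpow_pos x w) = Rpower x (Re w).
Proof.
  unfold cpow_pos, Cmod, Rpower; simpl.
  set (e := exp _); set (t := Im w * ln x).
  replace (e * cos t * (e * cos t * 1) + e * sin t * (e * sin t * 1))
    with (e * e * (sin t ^ 2 + cos t ^ 2)) by ring.
  rewrite <- !Rsqr_pow2, sin2_cos2, Rmult_1_r.
  apply sqrt_square; left; apply exp_pos.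
Qed.

Lemma Re_minus_real (s : C) (k : R) : Re (Cminus s (RtoC k)) = Re s - k.
Proof. unfold Re; simpl; ring. Qed.

(* Series in C.  Convergence in C is convergence of both coordinates, so a
   convergent complex series is summed by CSeries. *)

Lemma sum_n_Re (a : nat -> C) (N : nat) :
  sum_n (fun n => Re (a n)) N = Re (sum_n a N).
Proof.
  induction N as [|N IH]; [rewrite !sum_O; reflexivity|].
  rewrite !sum_Sn, IH; reflexivity.
Qed.

Lemma sum_n_Im (a : nat -> C) (N : nat) :
  sum_n (fun n => Im (a n)) N = Im (sum_n a N).
Proof.
  induction N as [|N IH]; [rewrite !sum_O; reflexivity|].
  rewrite !sum_Sn, IH; reflexivity.
Qed.

Lemma is_series_Re (a : nat -> C) (l : C) :
  is_series a l -> is_series (fun n => Re (a n)) (Re l).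
Proof.
  intros H; apply filterlim_locally; intros eps.
  generalize (proj1 (filterlim_locally _ _) H eps); apply filter_imp.
  intros N [hre _]; rewrite sum_n_Re; exact hre.
Qed.

Lemma is_series_Im (a : nat -> C) (l : C) :
  is_series a l -> is_series (fun n => Im (a n)) (Im l).
Proof.
  intros H; apply filterlim_locally; intros eps.
  generalize (proj1 (filterlim_locally _ _) H eps); apply filter_imp.
  intros N [_ him]; rewrite sum_n_Im; exact him.
Qed.

Lemma CSeries_correct (a : nat -> C) (l : C) : is_series a l -> CSeries a = l.
Proof.
  intros H; unfold CSeries.
  rewrite (is_series_unique _ _ (is_series_Re a l H)),
          (is_series_unique _ _ (is_series_Im a l H)).
  destruct l; reflexivity.
Qed.

Lemma is_series_C_unique (a : nat -> C) (l1 l2 : C) :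
  is_series a l1 -> is_series a l2 -> l1 = l2.
Proof.
  intros H1 H2; rewrite <- (CSeries_correct a l1 H1); exact (CSeries_correct a l2 H2).
Qed.

Lemma is_series_Cmod_le (a : nat -> C) (l : C) (L : R) :
  is_series a l -> is_series (fun n => Cmod (a n)) L -> Cmod l <= L.
Proof.
  intros Ha HL.
  assert (hnorm : is_lim_seq (fun N => norm (sum_n a N)) (norm l)).
  { eapply filterlim_comp; [exact Ha | apply filterlim_norm]. }
  assert (hpartial : forall N, norm (sum_n a N) <= sum_n (fun n => Cmod (a n)) N).
  { intros N; exact (norm_sum_n_m (K := C_AbsRing) (V := C_NormedModule) a 0 N). }
  exact (is_lim_seq_le _ _ (norm l) L hpartial hnorm HL).
Qed.

Lemma is_series_C_tail (a : nat -> C) (l : C) :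
  is_series a l -> is_series (fun n => a (S n)) (Cminus l (a 0%nat)).
Proof.
  intros H; apply (is_series_incr_1 (K := C_AbsRing) (V := C_NormedModule)).
  match goal with |- is_series _ ?l' => replace l' with l by (unfold plus; simpl; ring) end.
  exact H.
Qed.

(* Grouping consecutive terms in pairs: partial sums of the grouped series
   are the odd-indexed partial sums of the original one. *)
Lemma sum_n_pairs (a : nat -> C) (J : nat) :
  sum_n (fun j => Cplus (a (2 * j)%nat) (a (S (2 * j)))) J = sum_n a (S (2 * J)).
Proof.
  induction J as [|J IH].
  - rewrite sum_O; simpl; rewrite sum_Sn, sum_O; reflexivity.
  - rewrite sum_Sn, IH.
    replace (S (2 * S J)) with (S (S (S (2 * J)))) by lia.
    replace (2 * S J)%nat with (S (S (2 * J))) by lia.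
    rewrite (sum_Sn a (S (S (2 * J)))), (sum_Sn a (S (2 * J))).
    unfold plus; simpl; ring.
Qed.

Lemma is_series_pairs (a : nat -> C) (l : C) :
  is_series a l -> is_series (fun j => Cplus (a (2 * j)%nat) (a (S (2 * j)))) l.
Proof.
  intros H; unfold is_series.
  eapply filterlim_ext; [intros J; symmetry; apply sum_n_pairs|].
  eapply filterlim_comp; [|exact H].
  intros P [N HN]; exists N; intros n hn; apply HN; lia.
Qed.

(* Real comparison bounds.  The discrete analogue of
   int_x^oo t^(-sg) dt = x^(1-sg)/(sg-1): for sg > 1 the tail sums of
   n^(-sg) are controlled by a telescoping majorant. *)

Lemma Rpower_step_bound (sg x : R) : 1 < sg -> 0 < x ->
  (sg - 1) * Rpower (x + 1) (- sg) <= Rpower x (1 - sg) - Rpower (x + 1) (1 - sg).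
Proof.
  intros hsg hx; unfold Rpower.
  set (A := ln (x + 1)); set (B := ln x).
  (* ln (x+1) - ln x >= 1/(x+1), from 1 + t <= exp t at t = ln x - ln (x+1) *)
  assert (hlog : / (x + 1) <= A - B).
  { assert (h := exp_ineq1_le (B - A)).
    unfold Rminus in h; rewrite exp_plus, exp_Ropp in h; unfold A, B in h; rewrite !exp_ln in h by lra.
    replace (x * / (x + 1)) with (1 - / (x + 1)) in h by (field; lra).
    fold A B in h; lra. }
  assert (hB : exp ((1 - sg) * B) = exp ((1 - sg) * A) * exp ((sg - 1) * (A - B))).
  { rewrite <- exp_plus; f_equal; ring. }
  assert (hA : exp (- sg * A) = exp ((1 - sg) * A) * / (x + 1)).
  { replace (- sg * A) with ((1 - sg) * A + - A) by ring.
    rewrite exp_plus, exp_Ropp; unfold A; rewrite exp_ln by lra; reflexivity. }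
  assert (hexp := exp_ineq1_le ((sg - 1) * (A - B))).
  assert (hpos := exp_pos ((1 - sg) * A)).
  assert (hmono : (sg - 1) * / (x + 1) <= (sg - 1) * (A - B))
    by (apply Rmult_le_compat_l; lra).
  rewrite hB, hA.
  assert (exp ((1 - sg) * A) * ((sg - 1) * / (x + 1))
          <= exp ((1 - sg) * A) * (exp ((sg - 1) * (A - B)) - 1))
    by (apply Rmult_le_compat_l; lra).
  nra.
Qed.

Lemma Rpower_partial_sum_bound (sg x : R) (N : nat) : 1 < sg -> 0 < x ->
  sum_n (fun n => Rpower (INR n + x + 1) (- sg)) N
  <= (Rpower x (1 - sg) - Rpower (INR N + x + 1) (1 - sg)) / (sg - 1).
Proof.
  intros hsg hx; apply Rmult_le_reg_l with (sg - 1); [lra|].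
  replace ((sg - 1) * ((Rpower x (1 - sg) - Rpower (INR N + x + 1) (1 - sg)) / (sg - 1)))
    with (Rpower x (1 - sg) - Rpower (INR N + x + 1) (1 - sg)) by (field; lra).
  induction N as [|N IH].
  - rewrite sum_O; simpl INR; rewrite Rplus_0_l; exact (Rpower_step_bound sg x hsg hx).
  - rewrite sum_Sn; change (plus ?u ?v) with (u + v).
    assert (hstep := Rpower_step_bound sg (INR N + x + 1) hsg
                       ltac:(pose proof (pos_INR N); lra)).
    replace (INR (S N) + x + 1) with (INR N + x + 1 + 1) by (rewrite S_INR; ring).
    rewrite Rmult_plus_distr_l; lra.
Qed.

Lemma Rpower_series_bound (sg x : R) : 1 < sg -> 0 < x ->
  ex_series (fun n => Rpower (INR n + x + 1) (- sg)) /\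
  Series (fun n => Rpower (INR n + x + 1) (- sg)) <= Rpower x (1 - sg) / (sg - 1).
Proof.
  intros hsg hx.
  set (a := fun n => Rpower (INR n + x + 1) (- sg)).
  set (M := Rpower x (1 - sg) / (sg - 1)).
  assert (hbound : forall N, sum_n a N <= M).
  { intros N; eapply Rle_trans; [exact (Rpower_partial_sum_bound sg x N hsg hx)|].
    unfold M, Rdiv; apply Rmult_le_compat_r; [left; apply Rinv_0_lt_compat; lra|].
    assert (0 < Rpower (INR N + x + 1) (1 - sg)) by apply exp_pos; lra. }
  assert (hex : ex_series a).
  { destruct (ex_finite_lim_seq_incr (sum_n a) M) as [l hl]; [|exact hbound|].
    - intros n; rewrite sum_Sn; unfold plus; simpl.
      assert (0 < a (S n)) by apply exp_pos; lra.
    - exists l; exact hl. }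
  split; [exact hex|].
  exact (is_lim_seq_le (sum_n a) (fun _ => M) (Series a) M hbound
           (Series_correct _ hex) (is_lim_seq_const M)).
Qed.

Lemma Rpower_tends_to_0 (d : R) (u : nat -> R) : 0 < d ->
  is_lim_seq u p_infty -> is_lim_seq (fun n => Rpower (u n) (- d)) 0.
Proof.
  intros hd hu; apply is_lim_seq_spec; intros eps.
  set (K := Rpower eps (- / d)).
  assert (hK : 0 < K) by apply exp_pos.
  apply is_lim_seq_spec in hu.
  generalize (hu K); apply filter_imp; intros n hn.
  assert (hpow : / eps < Rpower (u n) d).
  { replace (/ eps) with (Rpower K d).
    - apply Rlt_Rpower_l; lra.
    - unfold K; rewrite Rpower_mult.
      replace (- / d * d) with (- (1)) by (field; lra).
      rewrite Rpower_Ropp, Rpower_1 by apply cond_pos; reflexivity. }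
  rewrite Rminus_0_r, Rabs_pos_eq by (left; apply exp_pos).
  rewrite Rpower_Ropp.
  assert (0 < / eps) by (apply Rinv_0_lt_compat, cond_pos).
  rewrite <- (Rinv_inv eps); apply Rinv_lt_contravar; [nra | exact hpow].
Qed.

Definition hurwitz_term (s : C) (a : R) (n : nat) : C := cpow_pos (INR n + a) (Copp s).

(* Absolute convergence, by comparison with the real bound above. *)
Lemma hurwitz_zeta_correct (s : C) (a : R) : 1 < Re s -> 0 < a ->
  is_series (hurwitz_term s a) (hurwitz_zeta s a).
Proof.
  intros hs ha.
  assert (hex : ex_series (V := C_CompleteNormedModule) (hurwitz_term s a)).
  { apply ex_series_le with (b := fun n => Rpower (INR n + a) (- Re s)).
    - intros n; change (Cmod (hurwitz_term s a n) <= Rpower (INR n + a) (- Re s)).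
      unfold hurwitz_term; rewrite Cmod_cpow_pos; apply Rle_refl.
    - apply ex_series_incr_1.
      eapply ex_series_ext; [|exact (proj1 (Rpower_series_bound (Re s) a hs ha))].
      intros n; rewrite S_INR; f_equal; ring. }
  destruct hex as [l hl].
  unfold hurwitz_zeta; fold (hurwitz_term s a).
  rewrite (CSeries_correct _ l hl); exact hl.
Qed.

Lemma hurwitz_zeta_shift (s : C) (a : R) : 1 < Re s -> 0 < a ->
  hurwitz_zeta s a = Cplus (cpow_pos a (Copp s)) (hurwitz_zeta s (a + 1)).
Proof.
  intros hs ha.
  assert (htail := is_series_C_tail _ _ (hurwitz_zeta_correct s a hs ha)).
  assert (hshift : is_series (hurwitz_term s (a + 1))
                     (Cminus (hurwitz_zeta s a) (cpow_pos a (Copp s)))).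
  { replace (cpow_pos a (Copp s)) with (hurwitz_term s a 0)
      by (unfold hurwitz_term; simpl INR; rewrite Rplus_0_l; reflexivity).
    eapply is_series_ext; [|exact htail]; intros n; unfold hurwitz_term.
    rewrite S_INR; f_equal; ring. }
  rewrite (is_series_C_unique _ _ _ (hurwitz_zeta_correct s (a + 1) hs ltac:(lra)) hshift).
  ring.
Qed.

Lemma hurwitz_zeta_bound (s : C) (x : R) : 1 < Re s -> 0 < x ->
  Cmod (hurwitz_zeta s (x + 1)) <= Rpower x (1 - Re s) / (Re s - 1).
Proof.
  intros hs hx.
  destruct (Rpower_series_bound (Re s) x hs hx) as [hex hle].
  eapply Rle_trans; [|exact hle].
  apply (is_series_Cmod_le (hurwitz_term s (x + 1))).
  - apply hurwitz_zeta_correct; lra.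
  - eapply is_series_ext; [|exact (Series_correct _ hex)].
    intros n; unfold hurwitz_term; rewrite Cmod_cpow_pos; simpl Re; f_equal; ring.
Qed.

(* Duplication formula: 2^(-w) (zeta(w, a) + zeta(w, a + 1/2)) = zeta(w, 2a);
   the terms of zeta(w, 2a) taken in pairs are 2^(-w) times the terms of the
   two series on the left. *)
Lemma hurwitz_zeta_duplication (w : C) (a : R) : 1 < Re w -> 0 < a ->
  Cmult (cpow_pos 2 (Copp w)) (Cplus (hurwitz_zeta w a) (hurwitz_zeta w (a + 1/2)))
  = hurwitz_zeta w (2 * a).
Proof.
  intros hw ha.
  assert (hpairs := is_series_pairs _ _ (hurwitz_zeta_correct w (2 * a) hw ltac:(lra))).
  assert (hsum := is_series_scal_l (cpow_pos 2 (Copp w)) _ _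
                    (is_series_plus _ _ _ _ (hurwitz_zeta_correct w a hw ha)
                       (hurwitz_zeta_correct w (a + 1/2) hw ltac:(lra)))).
  apply (is_series_C_unique _ _ _ hsum).
  eapply is_series_ext; [|exact hpairs]; intros j.
  change (scal ?c ?v) with (Cmult c v); change (plus ?u ?v) with (Cplus u v).
  unfold hurwitz_term.
  assert (hj := pos_INR j).
  rewrite Cmult_plus_distr_l, <- !cpow_pos_mul by lra.
  rewrite S_INR, mult_INR; simpl INR.
  f_equal; f_equal; field.
Qed.

(* The exponent n^(-s) with
   n = 2j+2 or 2j+3 occurs in zeta(s, 2m+2) exactly for m <= j, so it carries
   the weight 1 + 2 + ... + (j+1) in the double sum. *)

Definition lhs_term (s : C) (m : nat) : C :=
  Cmult (RtoC (INR (S m))) (hurwitz_zeta s (2 * INR (S m))).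

Definition triangular (j : nat) : R := (INR j + 1) * (INR j + 2) / 2.

Definition block (s : C) (j : nat) : C :=
  Cmult (RtoC (triangular j))
        (Cplus (cpow_pos (2 * INR j + 2) (Copp s)) (cpow_pos (2 * INR j + 3) (Copp s))).

(* What the M-th partial sum still owes: the weighted tail beyond 2M+3. *)
Definition remainder (s : C) (M : nat) : C :=
  Cmult (RtoC (triangular M)) (hurwitz_zeta s (2 * INR M + 4)).

Lemma hurwitz_zeta_shift2 (s : C) (a : R) : 1 < Re s -> 0 < a ->
  hurwitz_zeta s a
  = Cplus (Cplus (cpow_pos a (Copp s)) (cpow_pos (a + 1) (Copp s))) (hurwitz_zeta s (a + 2)).
Proof.
  intros hs ha.
  rewrite (hurwitz_zeta_shift s a), (hurwitz_zeta_shift s (a + 1)) by lra.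
  replace (a + 1 + 1) with (a + 2) by ring; ring.
Qed.

Lemma lhs_partial_sum (s : C) (M : nat) : 1 < Re s ->
  sum_n (lhs_term s) M = Cplus (sum_n (block s) M) (remainder s M).
Proof.
  intros hs; unfold lhs_term, block, remainder, triangular.
  induction M as [|M IH].
  - rewrite !sum_O; simpl INR.
    replace (2 * 1) with (2 * 0 + 2) by ring.
    rewrite (hurwitz_zeta_shift2 s (2 * 0 + 2)) by lra.
    replace (2 * 0 + 2 + 1) with (2 * 0 + 3) by ring.
    replace (2 * 0 + 2 + 2) with (2 * 0 + 4) by ring.
    C_field.
  - rewrite !sum_Sn, IH; change (plus ?u ?v) with (Cplus u v).
    pose proof (pos_INR M).
    rewrite !S_INR.
    replace (2 * (INR M + 1 + 1)) with (2 * INR M + 4) by ring.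
    replace (2 * (INR M + 1) + 2) with (2 * INR M + 4) by ring.
    replace (2 * (INR M + 1) + 3) with (2 * INR M + 4 + 1) by ring.
    replace (2 * (INR M + 1) + 4) with (2 * INR M + 4 + 2) by ring.
    rewrite (hurwitz_zeta_shift2 s (2 * INR M + 4)) by lra.
    C_field.
Qed.

(* |R_M| <= (2M+3)^2 |zeta(s, 2M+4)| <= (2M+3)^(3 - Re s) / (Re s - 1). *)
Lemma remainder_bound (s : C) (M : nat) : 1 < Re s ->
  Cmod (remainder s M) <= Rpower (2 * INR M + 3) (- (Re s - 3)) / (Re s - 1).
Proof.
  intros hs; pose proof (pos_INR M) as hM.
  set (x := 2 * INR M + 3); assert (hx : 0 < x) by (unfold x; lra).
  assert (hzeta := hurwitz_zeta_bound s x hs hx).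
  replace (x + 1) with (2 * INR M + 4) in hzeta by (unfold x; ring).
  assert (hweight : 0 <= triangular M <= x * x)
    by (unfold triangular, x; split; nra).
  assert (hpow : Rpower x (- (Re s - 3)) = x * x * Rpower x (1 - Re s)).
  { replace (- (Re s - 3)) with (1 + (1 + (1 - Re s))) by ring.
    rewrite !Rpower_plus, Rpower_1 by exact hx; ring. }
  unfold remainder; rewrite Cmod_mult, Cmod_R, Rabs_pos_eq, hpow by lra.
  unfold Rdiv; rewrite Rmult_assoc.
  apply Rmult_le_compat; [lra | apply Cmod_ge_0 | lra | exact hzeta].
Qed.

(* For Re s > 3 the exponent 3 - Re s is negative, so the remainder vanishes. *)
Lemma remainder_tends_to_0 (s : C) : 3 < Re s ->
  filterlim (remainder s) eventually (locally (RtoC 0)).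
Proof.
  intros hs; apply (filterlim_norm_zero (remainder s)).
  assert (hgrow : is_lim_seq (fun M => 2 * INR M + 3) p_infty).
  { apply (is_lim_seq_le_p_loc INR); [|exact is_lim_seq_INR].
    exists 0%nat; intros n _; pose proof (pos_INR n); lra. }
  assert (hbound := is_lim_seq_scal_r _ (/ (Re s - 1)) _
                      (Rpower_tends_to_0 (Re s - 3) _ ltac:(lra) hgrow)).
  simpl in hbound; rewrite Rmult_0_l in hbound.
  apply is_lim_seq_le_le with (u := fun _ => 0) (3 := hbound); [|apply is_lim_seq_const].
  intros M; split; [apply norm_ge_0 | apply (remainder_bound s M); lra].
Qed.

Lemma lhs_series_of_blocks (s : C) (V : C) : 3 < Re s ->
  is_series (block s) V -> is_series (lhs_term s) V.
Proof.
  intros hs hblocks; unfold is_series.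
  apply (filterlim_ext (fun M => plus (sum_n (block s) M) (remainder s M))).
  - intros M; symmetry; apply lhs_partial_sum; lra.
  - replace V with (plus V (RtoC 0)) by (unfold plus; simpl; ring).
    exact (filterlim_comp_2 (F := eventually) _ _ plus hblocks
             (remainder_tends_to_0 s hs) (filterlim_plus V (RtoC 0))).
Qed.

(* Identifying the series of blocks.  With n = 2j+2 the weight is
   (n^2 + 2n)/8, with n = 2j+3 it is (n^2 - 1)/8, so each block splits into
   terms of zeta(s-2, 1), zeta(s-1, 1) and zeta(s, 1/2). *)
Lemma block_expansion (s : C) (j : nat) :
  block s j =
  Cplus (Cplus
    (Cmult (RtoC (1/8)) (Cplus (hurwitz_term (Cminus s (RtoC 2)) 1 (S (2 * j)))
                               (hurwitz_term (Cminus s (RtoC 2)) 1 (S (S (2 * j))))))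
    (Cmult (RtoC (1/4)) (Cmult (cpow_pos 2 (Cminus (RtoC 1) s))
                               (hurwitz_term (Cminus s (RtoC 1)) 1 j))))
    (Cmult (RtoC (- (1/8))) (Cmult (cpow_pos 2 (Copp s)) (hurwitz_term s (1/2) (S j)))).
Proof.
  pose proof (pos_INR j) as hj; unfold block, triangular, hurwitz_term.
  set (u := cpow_pos (2 * INR j + 2) (Copp s)); set (v := cpow_pos (2 * INR j + 3) (Copp s)).
  assert (hsq : forall y, 0 < y ->
            cpow_pos y (Copp (Cminus s (RtoC 2))) = Cmult (RtoC (y * y)) (cpow_pos y (Copp s))).
  { intros y hy; replace (Copp (Cminus s (RtoC 2))) with (Cplus 1 (Cplus 1 (Copp s))) by ring.
    rewrite !cpow_pos_succ by exact hy; C_field. }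
  assert (heven : INR (S (2 * j)) + 1 = 2 * INR j + 2) by (rewrite S_INR, mult_INR; simpl; ring).
  assert (hodd : INR (S (S (2 * j))) + 1 = 2 * INR j + 3)
    by (rewrite !S_INR, mult_INR; simpl; ring).
  assert (hmid : Cmult (cpow_pos 2 (Cminus (RtoC 1) s)) (cpow_pos (INR j + 1) (Copp (Cminus s (RtoC 1))))
                 = Cmult (RtoC (2 * INR j + 2)) u).
  { replace (Copp (Cminus s (RtoC 1))) with (Cminus (RtoC 1) s) by ring.
    rewrite <- cpow_pos_mul by lra.
    replace (2 * (INR j + 1)) with (2 * INR j + 2) by ring.
    apply cpow_pos_succ; lra. }
  assert (hlast : Cmult (cpow_pos 2 (Copp s)) (cpow_pos (INR (S j) + 1/2) (Copp s)) = v).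
  { rewrite <- cpow_pos_mul by (try rewrite S_INR; lra); unfold v; f_equal.
    rewrite S_INR; field. }
  rewrite heven, hodd, !hsq, hmid, hlast by lra; fold u v.
  C_field.
Qed.

Lemma block_series (s : C) : 3 < Re s ->
  is_series (block s)
    (Cplus (Cplus
       (Cmult (RtoC (1/8)) (Cminus (hurwitz_zeta (Cminus s (RtoC 2)) 1) (RtoC 1)))
       (Cmult (RtoC (1/4)) (Cmult (cpow_pos 2 (Cminus (RtoC 1) s))
                                  (hurwitz_zeta (Cminus s (RtoC 1)) 1))))
       (Cmult (RtoC (- (1/8)))
          (Cminus (Cmult (cpow_pos 2 (Copp s)) (hurwitz_zeta s (1/2))) (RtoC 1)))).
Proof.
  intros hs.
  assert (h2 := is_series_pairs _ _ (is_series_C_tail _ _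
                  (hurwitz_zeta_correct (Cminus s (RtoC 2)) 1 ltac:(rewrite Re_minus_real; lra) ltac:(lra)))).
  assert (h1 := hurwitz_zeta_correct (Cminus s (RtoC 1)) 1 ltac:(rewrite Re_minus_real; lra) ltac:(lra)).
  assert (h0 := is_series_C_tail _ _ (hurwitz_zeta_correct s (1/2) ltac:(lra) ltac:(lra))).
  assert (hfirst2 : hurwitz_term (Cminus s (RtoC 2)) 1 0 = RtoC 1).
  { unfold hurwitz_term; simpl INR; rewrite Rplus_0_l; apply cpow_pos_base_1. }
  assert (hfirst0 : Cmult (cpow_pos 2 (Copp s)) (hurwitz_term s (1/2) 0) = RtoC 1).
  { unfold hurwitz_term; rewrite <- cpow_pos_mul by (simpl; lra).
    replace (2 * (INR 0 + 1/2)) with 1 by (simpl; field); apply cpow_pos_base_1. }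
  rewrite hfirst2 in h2.
  assert (hsum := is_series_plus _ _ _ _
    (is_series_plus _ _ _ _ (is_series_scal_l (RtoC (1/8)) _ _ h2)
       (is_series_scal_l (RtoC (1/4)) _ _
          (is_series_scal_l (cpow_pos 2 (Cminus (RtoC 1) s)) _ _ h1)))
    (is_series_scal_l (RtoC (- (1/8))) _ _ (is_series_scal_l (cpow_pos 2 (Copp s)) _ _ h0))).
  eapply is_series_ext; [intros j; symmetry; apply block_expansion|].
  match goal with |- is_series _ ?l => replace l with
    (plus (plus (scal (RtoC (1/8)) (Cminus (hurwitz_zeta (Cminus s (RtoC 2)) 1) (RtoC 1)))
                (scal (RtoC (1/4)) (scal (cpow_pos 2 (Cminus (RtoC 1) s))
                                         (hurwitz_zeta (Cminus s (RtoC 1)) 1))))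
          (scal (RtoC (- (1/8))) (scal (cpow_pos 2 (Copp s))
                   (Cminus (hurwitz_zeta s (1/2)) (hurwitz_term s (1/2) 0))))) end.
  - exact hsum.
  - repeat change (scal ?c ?v) with (Cmult c v);
      repeat change (plus ?u ?v) with (Cplus u v).
    replace (Cmult (cpow_pos 2 (Copp s)) (Cminus (hurwitz_zeta s (1/2)) (hurwitz_term s (1/2) 0)))
      with (Cminus (Cmult (cpow_pos 2 (Copp s)) (hurwitz_zeta s (1/2))) (RtoC 1))
      by (rewrite <- hfirst0; ring).
    reflexivity.
Qed.

Theorem mainTheorem10 (s : C) (hs : 3 < Re s) :
  is_series (fun m : nat => Cmult (RtoC (INR (S m))) (hurwitz_zeta s (2 * INR (S m))))
    (Cmult (RtoC (1 / 8))
       (Cminus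
          (Cplus
             (Cmult (Cplus (RtoC 1) (cpow_pos 2 (Cminus (RtoC 1) s)))
                    (riemann_zeta (Cminus s (RtoC 1))))
             (riemann_zeta (Cminus s (RtoC 2))))
          (Cmult (cpow_pos 2 (Cminus (RtoC 1) s))
             (Cplus (hurwitz_zeta (Cminus s (RtoC 1)) (1 / 2))
                    (Cmult (RtoC (1 / 2)) (hurwitz_zeta s (1 / 2))))))).
Proof.
  apply (lhs_series_of_blocks s _ hs).
  refine (eq_ind _ (is_series (block s)) (block_series s hs) _ _).
  unfold riemann_zeta.
  set (p := cpow_pos 2 (Copp s)).
  set (Z1 := hurwitz_zeta (Cminus s (RtoC 1)) 1).
  set (H1 := hurwitz_zeta (Cminus s (RtoC 1)) (1/2)).
  assert (hhalf : cpow_pos 2 (Cminus (RtoC 1) s) = Cmult (RtoC 2) p)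
    by (apply cpow_pos_succ; lra).
  assert (hdup := hurwitz_zeta_duplication (Cminus s (RtoC 1)) (1/2)
                    ltac:(rewrite Re_minus_real; lra) ltac:(lra)).
  replace (1/2 + 1/2) with 1 in hdup by field.
  replace (2 * (1/2)) with 1 in hdup by field.
  replace (Copp (Cminus s (RtoC 1))) with (Cminus (RtoC 1) s) in hdup by ring.
  fold Z1 H1 in hdup; rewrite hhalf in hdup.
  assert (hH1 : Cmult (Cmult (RtoC 2) p) H1 = Cminus Z1 (Cmult (Cmult (RtoC 2) p) Z1))
    by (rewrite <- hdup at 1; ring).
  rewrite hhalf, Cmult_plus_distr_l, hH1.
  C_field.
Qed.
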